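(* Let $\mathcal{L},\tilde{\mathcal{L}}$ be distributions on $[0,\infty]$ satisfying: (H1) $\mathcal{L}$ is useful; (H2) $\mathcal{L}([0,\infty))>p_c$ and $\tilde{\mathcal{L}}([0,\infty))>p_c$; (H3) $\mathcal{L}\ne\tilde{\mathcal{L}}$; and let $(\tau,\tilde\tau)$ be a pair of random variables with marginals $\mathcal{L},\tilde{\mathcal{L}}$ and $\mathbb{E}[\tilde\tau\mid\tau]\le\tau$. Assume moreover that $\mathbb{P}(\mathbb{E}[\tilde\tau\mid\tau]=\tau)=1$ and $\{\tau<\infty\}=\{\tilde\tau<\infty\}$ almost surely. Then there exist $\beta>0$ and $\delta>0$ such that \[\mathbb{P}\big(\tau<\infty,\ \mathbb{P}(\tilde\tau\le\tau-2\delta\mid\tau)\ge\beta,\ \mathbb{P}(\tilde\tau\ge\tau\mid\tau)\ge\beta\big)>0.\]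
   Context: $p_c$ / $\overrightarrow{p_c}$: critical probabilities of Bernoulli / oriented Bernoulli bond percolation on $\mathbb{Z}^d$, $d\ge2$. With $t_{\min}$ the minimum of the support of $\mathcal{L}$, $\mathcal{L}$ is useful if $\mathcal{L}(\{t_{\min}\})<p_c$ when $t_{\min}=0$ and $<\overrightarrow{p_c}$ when $t_{\min}>0$. *)

From HB Require Import structures.
From mathcomp Require Import all_boot all_order all_algebra.
From mathcomp Require Import all_classical all_reals all_analysis measurable_realfun.
Set Implicit Arguments. Unset Strict Implicit. Unset Printing Implicit Defensive.
Import Order.TTheory GRing.Theory Num.Theory.
Local Open Scope classical_set_scope.
Local Open Scope ring_scope.

(* Vertices of the box {-n..n}^d, shifted to {0..2n}^d; the origin is the
   center (n,...,n). *)
Definition vtx (d n : nat) := {ffun 'I_d -> 'I_(n.*2.+1)}.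

Definition center (d n : nat) : vtx d n := [ffun _ => inord n].

Definition on_boundary (d n : nat) (x : vtx d n) : bool :=
  [exists i, (nat_of_ord (x i) == 0%N) || (nat_of_ord (x i) == n.*2)].

(* (x,y) is a nearest-neighbour edge with y = x + e_i for some i
   (each undirected edge of the box is represented exactly once,
   and this is also the oriented edge x -> x + e_i). *)
Definition pedge (d n : nat) (x y : vtx d n) : bool :=
  [exists i, (nat_of_ord (y i) == (nat_of_ord (x i)).+1) &&
             [forall j, (j != i) ==> (y j == x j)]].

Definition box_edges (d n : nat) : {set vtx d n * vtx d n} :=
  [set e | pedge e.1 e.2].

Definition open_rel (d n : nat) (w : {set vtx d n * vtx d n}) : rel (vtx d n) :=
  fun x y => ((x, y) \in w) || ((y, x) \in w).
Definition oriented_open_rel (d n : nat) (w : {set vtx d n * vtx d n})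
  : rel (vtx d n) := fun x y => (x, y) \in w.

(* probability, under the Bernoulli(p) product measure on the edges of the
   box, that the origin is joined by an open (resp. open oriented) path to the
   boundary of the box of radius n *)
Definition crossing_prob (R : realType) (oriented : bool) (d n : nat) (p : R)
  : R :=
  \sum_(w : {set vtx d n * vtx d n} | w \subset box_edges d n)
     p ^+ #|w| * (1 - p) ^+ (#|box_edges d n| - #|w|)
     * ([exists v, on_boundary v &&
          connect (if oriented then oriented_open_rel w else open_rel w)
                  (center d n) v] : bool)%:R.

(* theta(p) = lim_n crossing_prob p n (decreasing), so theta(p) = 0 iff
   crossing probabilities become arbitrarily small. *)
Definition no_percolation (R : realType) (oriented : bool) (d : nat) (p : R)
  : Prop := forall eps : R, 0 < eps -> exists n, crossing_prob oriented d n p < eps.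

Definition pc (R : realType) (d : nat) : R :=
  sup [set p : R | 0 <= p <= 1 /\ no_percolation false d p].
Definition pc_oriented (R : realType) (d : nat) : R :=
  sup [set p : R | 0 <= p <= 1 /\ no_percolation true d p].

Local Open Scope ereal_scope.

Definition law_support (d : measure_display) (Omega : measurableType d)
  (R : realType) (P : probability Omega R) (tau : Omega -> \bar R)
  : set (\bar R) :=
  [set t | forall U : set (\bar R), open U -> U t -> 0 < P (tau @^-1` U)].

Definition t_min (d : measure_display) (Omega : measurableType d)
  (R : realType) (P : probability Omega R) (tau : Omega -> \bar R) : \bar R :=
  ereal_inf (law_support P tau).

Definition useful (d : measure_display) (Omega : measurableType d)
  (R : realType) (dim : nat) (P : probability Omega R) (tau : Omega -> \bar R)
  : Prop :=
  let tm := t_min P tau in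
  (tm = 0 -> P [set w | tau w = tm] < (pc R dim)%:E) /\
  (0 < tm -> P [set w | tau w = tm] < (pc_oriented R dim)%:E).

(* g is a version of E[X | sigma(tau)] for a [0,+oo]-valued X:
   g is [0,+oo]-valued, sigma(tau)-measurable and has the same integrals
   as X on every event of sigma(tau). *)
Definition cond_exp_version (d : measure_display) (Omega : measurableType d)
  (R : realType) (P : probability Omega R) (tau X g : Omega -> \bar R) : Prop :=
  (forall w, 0 <= g w) /\
  (forall B : set (\bar R), measurable B ->
     exists C : set (\bar R), measurable C /\ tau @^-1` C = g @^-1` B) /\
  (forall C : set (\bar R), measurable C ->
     \int[P]_(w in tau @^-1` C) X w = \int[P]_(w in tau @^-1` C) g w).

Definition cond_prob_version (d : measure_display) (Omega : measurableType d)
  (R : realType) (P : probability Omega R) (tau : Omega -> \bar R)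
  (A : set Omega) (g : Omega -> \bar R) : Prop :=
  cond_exp_version P tau (fun w => (\1_A w)%:E) g.

(* Since E[taut | tau] = tau, the variable taut cannot dominate tau almost
   surely on {tau < oo}: it would then equal tau there, and with
   {tau < oo} = {taut < oo} the two laws would coincide.  Hence some drop event
   {tau <= N, taut <= tau - 2 delta} has probability p > 0.  On a
   sigma(tau)-event E inside {tau <= N}, the martingale identity
   int_E taut = int_E tau bounds 2 delta P(drop, E) by the integral of taut
   over E /\ {taut >= tau}; by uniform integrability of taut on {tau <= N} this
   is small once P(taut >= tau | tau) < beta on E, for beta small.  So at most
   p/4 of the drop mass lies where P(taut >= tau | tau) < beta, at most
   beta <= p/4 lies where P(drop | tau) < beta, and the remaining mass lies in
   the event of the conclusion. *)

From HB Require Import structures.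
From mathcomp Require Import all_boot all_order all_algebra.
From mathcomp Require Import all_classical all_reals all_analysis measurable_realfun.
From mathcomp Require Import lra.
Import Order.TTheory GRing.Theory Num.Theory.
Local Open Scope classical_set_scope.
Local Open Scope ring_scope.
Local Open Scope ereal_scope.

Section extended_real_inequalities.
Context {R : realType}.
Implicit Types (x y s t : \bar R).

Lemma lee_of_lt_addinv x y :
  (forall k : nat, x < y + (k.+1%:R^-1)%:E) -> x <= y.
Proof.
case: y => [s| |] h; [|by rewrite leey|by have := h 0%N; rewrite /= ltNge leNye].
case: x h => [r| |] h; [|by have := h 0%N; rewrite ltNge leey|by rewrite leNye].
rewrite lee_fin leNgt; apply/negP => /ltr_add_invr[k].
by move=> sr; have := h k; rewrite -EFinD lte_fin => /(lt_trans sr); rewrite ltxx.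
Qed.

Lemma lee_drop_rise (e : R) t s : (0 <= e)%R -> 0 <= t -> 0 <= s ->
  e%:E * ((s <= t - e%:E)%E%:R)%:E + s <= t + s * ((t <= s)%E%:R)%:E.
Proof.
move=> e0; case: t => [t| |] // t0; case: s => [s| |] // s0.
- rewrite -EFinB !lee_fin in t0 s0 *.
  have [h1|h1] := leP s (t - e)%R; have [h2|h2] := leP t s;
    rewrite /=; lra.
- by rewrite leey /= mule1 addey ?leey.
- by rewrite [leRHS]addye ?leey // -EFinM; apply: fin_num_ninfty.
- by rewrite [leRHS]addye ?leey // mule1.
Qed.

Lemma ltey_exists_natr {x} : x < +oo -> exists N : nat, x <= N%:R%:E.
Proof.
case: x => [r| |]; [move=> _|by rewrite ltxx|by exists 0%N; rewrite leNye].
exists (Num.bound `|r|); rewrite lee_fin (le_trans (ler_norm r)) // ltW //.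
exact: archi_boundP.
Qed.

Lemma emeasurable_le (r : \bar R) : measurable [set x : \bar R | x <= r].
Proof. by have := emeasurable_itv `]-oo, r]; congr measurable. Qed.

Lemma emeasurable_lt (r : \bar R) : measurable [set x : \bar R | x < r].
Proof. by have := emeasurable_itv `]-oo, r[; congr measurable. Qed.

Lemma emeasurable_ge (r : \bar R) : measurable [set x : \bar R | r <= x].
Proof.
rewrite (_ : [set x | r <= x] = ~` [set x | x < r]).
  exact/measurableC/emeasurable_lt.
by apply/seteqP; split => x /=; rewrite leNgt => /negP.
Qed.

End extended_real_inequalities.

Lemma indic_boolE (T : Type) (R : pzRingType) (b : T -> bool) w :
  \1_[set x | b x] w = (b w)%:R :> R.
Proof.
by rewrite indicE (_ : w \in _ = b w) //; apply/idP/idP => [/set_mem|/mem_set].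
Qed.

Section measure_integrals.
Context {d} {T : measurableType d} {R : realType} {mu : {measure set T -> \bar R}}.

Lemma ge0_le_integral_balanced (E : set T) (a b u v : T -> \bar R) :
  measurable E ->
  measurable_fun setT a -> measurable_fun setT b ->
  measurable_fun setT u -> measurable_fun setT v ->
  (forall w, 0 <= a w) -> (forall w, 0 <= b w) ->
  (forall w, 0 <= u w) -> (forall w, 0 <= v w) ->
  \int[mu]_(w in E) a w = \int[mu]_(w in E) b w ->
  \int[mu]_(w in E) a w \is a fin_num ->
  {ae mu, forall w, E w -> u w + a w <= b w + v w} ->
  \int[mu]_(w in E) u w <= \int[mu]_(w in E) v w.
Proof.
move=> mE mfa mfb mfu mfv a0 b0 u0 v0 ab abfin uavb.
have := @ae_ge0_le_integral _ _ _ mu E mE (fun w => u w + a w)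
  (fun w => b w + v w) _
  (emeasurable_funD (measurable_funTS mfu) (measurable_funTS mfa)) _
  (emeasurable_funD (measurable_funTS mfb) (measurable_funTS mfv)) uavb.
- rewrite !ge0_integralD //; try exact: measurable_funTS.
  rewrite -ab addeC leeD2lE //; apply.
- by move=> w _; exact: adde_ge0.
- by move=> w _; exact: adde_ge0.
Qed.

Lemma ge0_integral_continuous {f : T -> \bar R} {e : R} :
  mu.-integrable setT f -> (forall x, 0 <= f x) ->
  (0 < e)%R -> exists2 r : R, (0 < r)%R &
    forall A, measurable A -> mu A < r%:E -> \int[mu]_(x in A) f x < e%:E.
Proof.
move=> intf f0 e0.
have := dominates_induced intf; set nu := induced_charge _ => nuP.
have [Pp [Nn pn]] := Hahn_decomposition nu.
have [r [r0 re]] := charge_variation_continuous pn nuP e0.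
exists r => // A mA Ar; apply: le_lt_trans (re _ mA Ar).
apply: le_trans (abse_charge_variation _ _) => //=.
rewrite /induced_charge /= gee0_abs ?integral_ge0 //.
by rewrite [leRHS](eq_integral f) // => x _; rewrite /= gee0_abs.
Qed.

Lemma ge0_integral_fin_num_bounded (nu : {finite_measure set T -> \bar R})
    (E : set T) (f : T -> \bar R) (M : R) :
  measurable E -> measurable_fun E f -> (forall w, E w -> 0 <= f w) ->
  (forall w, E w -> f w <= M%:E) -> \int[nu]_(w in E) f w \is a fin_num.
Proof.
move=> mE mf f0 fM.
rewrite ge0_fin_numE ?integral_ge0 //.
apply: le_lt_trans (ge0_le_integral nu mE f0 mf (measurable_cst M%:E) fM) _.
by rewrite integral_cst // ltey_eq fin_numM // fin_num_measure.
Qed.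

Lemma le_measure_cover3 {A B C D : set T} :
  measurable A -> measurable B -> measurable C -> measurable D ->
  A `<=` B `|` C `|` D -> mu A <= mu B + mu C + mu D.
Proof.
move=> mA mB mC mD ABCD; have mBC := measurableU _ _ mB mC.
apply: le_trans (le_measure _ _ _ ABCD) _; rewrite ?inE //; first exact: measurableU.
apply: le_trans (measureU2 _ mBC mD) _.
by rewrite leeD2r // measureU2.
Qed.

Lemma ae_eq_preimage_measure (f g : T -> \bar R) (B : set (\bar R)) :
  measurable_fun setT f -> measurable_fun setT g -> measurable B ->
  {ae mu, forall w, f w = g w} -> mu (f @^-1` B) = mu (g @^-1` B).
Proof.
move=> mf mg mB fg.
have mpre (h : T -> \bar R) : measurable_fun setT h -> measurable (h @^-1` B).
  by move=> mh; rewrite -[X in measurable X]setTI; exact: mh.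
rewrite -(setIT (f @^-1` B)) -(setIT (g @^-1` B)) -!integral_indic //; try exact: mpre.
apply: ae_eq_integral => //.
- exact/measurable_EFinP/measurable_indic/mpre.
- exact/measurable_EFinP/measurable_indic/mpre.
- apply: filterS fg => w fgw _; rewrite !indicE.
  suff -> : (w \in f @^-1` B) = (w \in g @^-1` B) by [].
  by apply/idP/idP; rewrite !in_setE /preimage /= fgw.
Qed.

End measure_integrals.

Section tau_events.
Context {d} {T : measurableType d} {R : realType} (P : probability T R).
Variable tau : T -> \bar R.
Hypothesis mtau : measurable_fun setT tau.

Definition tau_measurable (E : set T) :=
  exists2 C : set (\bar R), measurable C & tau @^-1` C = E.

Lemma tau_measurable_measurable {E} : tau_measurable E -> measurable E.
Proof. by move=> [C mC <-]; rewrite -[X in measurable X]setTI; exact: mtau. Qed.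

Lemma tau_measurableI {E F} :
  tau_measurable E -> tau_measurable F -> tau_measurable (E `&` F).
Proof.
by move=> [C mC <-] [D mD <-]; exists (C `&` D); [exact: measurableI|].
Qed.

Lemma tau_measurable_cond_exp {X g B} : cond_exp_version P tau X g ->
  measurable B -> tau_measurable (g @^-1` B).
Proof. by move=> [_ [gtau _]] /gtau[C [mC CB]]; exists C. Qed.

Lemma measurable_cond_exp {X g} : cond_exp_version P tau X g ->
  measurable_fun setT g.
Proof.
move=> gX _ B mB; rewrite setTI.
exact/tau_measurable_measurable/(tau_measurable_cond_exp gX mB).
Qed.

Lemma integral_cond_exp {X g E} : cond_exp_version P tau X g ->
  tau_measurable E -> \int[P]_(w in E) X w = \int[P]_(w in E) g w.
Proof. by move=> [_ [_ gX]] [C mC <-]; exact: gX. Qed.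

Lemma cond_prob_le {A c E} {b : R} : cond_prob_version P tau A c ->
  measurable A -> tau_measurable E -> (0 <= b)%R ->
  (forall w, E w -> c w <= b%:E) -> P (A `&` E) <= b%:E.
Proof.
move=> cA mA tE b0 cb; have mE := tau_measurable_measurable tE.
rewrite -integral_indic // (integral_cond_exp cA tE).
apply: le_trans (ge0_le_integral P mE _ _ (measurable_cst b%:E) cb) _.
- by move=> w _; case: cA => + _; apply.
- exact/measurable_funTS/(measurable_cond_exp cA).
- rewrite integral_cst // -[leRHS]mule1 lee_wpmul2l ?lee_fin //.
  exact: probability_le1.
Qed.

Lemma integral_cond_exp_ae {X g Y E} : cond_exp_version P tau X g ->
  measurable_fun setT Y -> {ae P, forall w, g w = Y w} ->
  tau_measurable E -> \int[P]_(w in E) X w = \int[P]_(w in E) Y w.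
Proof.
move=> gX mY gY tE; rewrite (integral_cond_exp gX tE).
apply: ae_eq_integral; [exact: tau_measurable_measurable tE| | |].
- exact/measurable_funTS/(measurable_cond_exp gX).
- exact: measurable_funTS.
- by apply: filterS gY => w + _.
Qed.

Lemma measurable_cond_prob_ge {A1 A2 c1 c2} (b : R) :
  cond_prob_version P tau A1 c1 -> cond_prob_version P tau A2 c2 ->
  measurable [set w | tau w < +oo /\ b%:E <= c1 w /\ b%:E <= c2 w].
Proof.
move=> c1V c2V; apply: tau_measurable_measurable.
have -> : [set w | tau w < +oo /\ b%:E <= c1 w /\ b%:E <= c2 w] =
    tau @^-1` [set x | x < +oo] `&` c1 @^-1` [set x | b%:E <= x]
    `&` c2 @^-1` [set x | b%:E <= x].
  by apply/seteqP; split => w /=; [move=> [? [? ?]]|move=> [[? ?] ?]].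
apply: tau_measurableI; last exact: tau_measurable_cond_exp c2V (emeasurable_ge _).
apply: tau_measurableI; last exact: tau_measurable_cond_exp c1V (emeasurable_ge _).
by exists [set x | x < +oo]; [exact: emeasurable_lt|].
Qed.

Section martingale.
Variable taut : T -> \bar R.
Hypothesis mtaut : measurable_fun setT taut.
Hypotheses (tau_ge0 : forall w, 0 <= tau w) (taut_ge0 : forall w, 0 <= taut w).
Hypothesis tau_mart : forall E, tau_measurable E ->
  \int[P]_(w in E) taut w = \int[P]_(w in E) tau w.

Definition tau_le (N : nat) := tau @^-1` [set x | x <= N%:R%:E].
Definition taut_drop (e : R) := [set w | taut w <= tau w - (2 * e)%:E].
Definition taut_rise := [set w | tau w <= taut w].

Lemma tau_measurable_le N : tau_measurable (tau_le N).
Proof. by exists [set x | x <= N%:R%:E]; [exact: emeasurable_le|]. Qed.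

Lemma measurable_taut_drop e : measurable (taut_drop e).
Proof.
rewrite -[X in measurable X]setTI; apply: measurable_lee => //.
by apply: emeasurable_funB => //; exact: measurable_cst.
Qed.

Lemma measurable_taut_rise : measurable taut_rise.
Proof. by rewrite -[X in measurable X]setTI; exact: measurable_lee. Qed.

Lemma integral_tau_le_fin_num {N E} : tau_measurable E -> E `<=` tau_le N ->
  \int[P]_(w in E) tau w \is a fin_num.
Proof.
move=> tE EN; apply: (@ge0_integral_fin_num_bounded _ _ _ P _ _ N%:R).
- exact: tau_measurable_measurable tE.
- exact: measurable_funTS.
- by move=> w _; exact: tau_ge0.
- by move=> w /EN.
Qed.

Lemma drop_mass_le {N e E} : (0 <= e)%R -> tau_measurable E -> E `<=` tau_le N ->
  (2 * e)%:E * P (taut_drop e `&` E) <= \int[P]_(w in E `&` taut_rise) taut w.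
Proof.
move=> e0 tE EN; have mE := tau_measurable_measurable tE.
have e20 : (0 <= 2 * e)%R by rewrite mulr_ge0.
rewrite integral_mkcondr epatch_indic.
rewrite -(integral_indic _ mE (measurable_taut_drop e)).
have mdrop : measurable_fun setT (fun w => (\1_(taut_drop e) w)%:E : \bar R).
  exact/measurable_EFinP/measurable_indic/measurable_taut_drop.
rewrite -(ge0_integralZl _ mE (measurable_funTS mdrop)) ?lee_fin //.
apply: (@ge0_le_integral_balanced _ _ _ _ _ taut tau) => //.
- exact: emeasurable_funM (measurable_cst _) mdrop.
- apply: emeasurable_funM => //.
  exact/measurable_EFinP/measurable_indic/measurable_taut_rise.
- by move=> w; rewrite mule_ge0 ?lee_fin.
- by move=> w; rewrite mule_ge0 ?lee_fin.
- exact: tau_mart.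
- by rewrite tau_mart //; exact: integral_tau_le_fin_num EN.
- apply: aeW => w _; rewrite /= !indic_boolE.
  exact: lee_drop_rise.
Qed.

Lemma ae_le_of_drop_null :
  (forall N e, (0 < e)%R -> P (tau_le N `&` taut_drop e) = 0) ->
  {ae P, forall w, tau w < +oo -> tau w <= taut w}.
Proof.
move=> drop0.
have null N k : {ae P, forall w, tau_le N w -> ~ taut_drop (k.+1%:R^-1 / 2) w}.
  exists (tau_le N `&` taut_drop (k.+1%:R^-1 / 2)); split.
  - exact/measurableI/measurable_taut_drop/tau_measurable_measurable/tau_measurable_le.
  - by apply: drop0; rewrite divr_gt0.
  - by move=> w /= /not_implyP[Nw /contrapT].
apply: filterS (ae_foralln (fun N => ae_foralln (null N))) => w nodrop wfin.
have [N wN] := ltey_exists_natr wfin.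
apply: lee_of_lt_addinv => k; have := nodrop N k wN.
rewrite /taut_drop /= mulrC divfK ?pnatr_eq0 // => /negP.
by rewrite -ltNge EFinN lteBlDr.
Qed.

Lemma ae_taut_lt_tau_add N (eps : R) : (0 < eps)%R ->
  {ae P, forall w, tau w < +oo -> tau w <= taut w} ->
  {ae P, forall w, tau_le N w -> taut w < tau w + eps%:E}.
Proof.
move=> eps0 tau_le_taut; set gap := [set w | tau w + eps%:E <= taut w].
have mN := tau_measurable_measurable (tau_measurable_le N).
have mgap : measurable gap.
  rewrite -[X in measurable X]setTI; apply: measurable_lee => //.
  by apply: emeasurable_funD => //; exact: measurable_cst.
have mgapE : measurable_fun setT (fun w => (\1_gap w)%:E : \bar R).
  exact/measurable_EFinP/measurable_indic.
have : \int[P]_(w in tau_le N) (eps%:E * (\1_gap w)%:E) <=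
       \int[P]_(w in tau_le N) cst 0 w.
  apply: (@ge0_le_integral_balanced _ _ _ _ _ tau taut) => //.
  - exact: emeasurable_funM (measurable_cst _) mgapE.
  - by move=> w; rewrite mule_ge0 ?lee_fin // ltW.
  - by rewrite tau_mart //; exact: tau_measurable_le.
  - exact: (integral_tau_le_fin_num (N := N) (tau_measurable_le N)).
  - apply: filterS tau_le_taut => w wle wN; rewrite indic_boolE /= adde0.
    have [wgap|_] := leP (tau w + eps%:E) (taut w); first by rewrite mule1 addeC.
    rewrite mule0 add0e; apply: wle.
    by apply: le_lt_trans wN _; rewrite ltry.
rewrite integral0 (ge0_integralZl _ mN (measurable_funTS mgapE)) ?lee_fin ?(ltW eps0) //.
rewrite integral_indic // pmule_rle0 ?lte_fin // measure_le0 => /eqP gap0.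
exists (gap `&` tau_le N); split; [exact: measurableI|exact: gap0|].
by move=> w /= /not_implyP[wN] /negP; rewrite -leNgt.
Qed.

Lemma ae_eq_of_ae_le : {ae P, forall w, tau w < +oo -> tau w <= taut w} ->
  {ae P, forall w, tau w < +oo -> taut w = tau w}.
Proof.
move=> tau_le_taut.
have gap0 N (k : nat) :
    {ae P, forall w, tau_le N w -> taut w < tau w + (k.+1%:R^-1)%:E}.
  by apply: ae_taut_lt_tau_add => //; rewrite invr_gt0.
apply: filterS2 tau_le_taut (ae_foralln (fun N => ae_foralln (gap0 N))).
move=> w wle gap0w wfin; have [N wN] := ltey_exists_natr wfin.
apply/le_anti; rewrite wle // andbT.
by apply: lee_of_lt_addinv => k; exact: gap0w N k wN.
Qed.

Lemma exists_drop_pos :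
  ~ (forall B : set (\bar R), measurable B -> P (tau @^-1` B) = P (taut @^-1` B)) ->
  {ae P, forall w, (tau w < +oo) = (taut w < +oo)} ->
  exists N e, (0 < e)%R /\ 0 < P (tau_le N `&` taut_drop e).
Proof.
move=> law_neq fin_eq; apply: contrapT => nodrop; apply: law_neq => B mB.
have drop0 N e : (0 < e)%R -> P (tau_le N `&` taut_drop e) = 0.
  move=> e0; apply/eqP; rewrite eq_le measure_ge0 andbT leNgt; apply/negP.
  by move=> pos; apply: nodrop; exists N, e.
apply: ae_eq_preimage_measure => //.
apply: filterS2 fin_eq (ae_eq_of_ae_le (ae_le_of_drop_null drop0)).
move=> w fin_w eq_w; have [wfin|] := ltP (tau w) +oo; first by rewrite eq_w.
rewrite leye_eq => /eqP tauwy; move: fin_w; rewrite tauwy ltxx => /esym.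
by rewrite ltey => /negbFE/eqP ->.
Qed.

Lemma drop_rare_where_rise_unlikely N {e eps} : (0 < e)%R -> (0 < eps)%R ->
  exists2 b : R, (0 < b)%R & forall c E,
    cond_prob_version P tau taut_rise c -> tau_measurable E -> E `<=` tau_le N ->
    (forall w, E w -> c w <= b%:E) -> P (taut_drop e `&` E) < eps%:E.
Proof.
move=> e0 eps0; have tN := tau_measurable_le N.
have mN := tau_measurable_measurable tN.
have intN : P.-integrable setT (taut \_ (tau_le N)).
  apply/(integrable_mkcond _ mN)/integrableP; split; first exact: measurable_funTS.
  under eq_integral do rewrite gee0_abs //.
  rewrite -ge0_fin_numE ?integral_ge0 // tau_mart //.
  exact: (integral_tau_le_fin_num (N := N) tN).
have taut_patch_ge0 w : 0 <= (taut \_ (tau_le N)) w.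
  by rewrite patchE; case: ifP.
have e20 : (0 < 2 * e)%R by rewrite mulr_gt0.
have [r r0 small] := ge0_integral_continuous intN taut_patch_ge0 (mulr_gt0 e20 eps0).
exists (r / 2)%R => [|c E cV tE EN cb]; first by rewrite divr_gt0.
have mE := tau_measurable_measurable tE.
rewrite -(lte_pmul2l (z := (2 * e)%:E)) ?lte_fin // -EFinM.
apply: le_lt_trans (drop_mass_le (ltW e0) tE EN) _.
rewrite -[X in \int[P]_(w in X) _](setIidl (B := tau_le N)); last by move=> w [/EN].
rewrite integral_mkcondr; apply: small; first exact/measurableI/measurable_taut_rise.
rewrite setIC; apply: le_lt_trans (cond_prob_le cV measurable_taut_rise tE _ cb) _.
  by rewrite divr_ge0 // ltW.
by rewrite lte_fin ltr_pdivrMr // ltr_pMr // ltr1n.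
Qed.

Lemma cond_prob_lower_bound {N e} : (0 < e)%R -> 0 < P (tau_le N `&` taut_drop e) ->
  exists2 b : R, (0 < b)%R & forall c1 c2,
    cond_prob_version P tau (taut_drop e) c1 ->
    cond_prob_version P tau taut_rise c2 ->
    0 < P [set w | tau w < +oo /\ b%:E <= c1 w /\ b%:E <= c2 w].
Proof.
move=> e0 drop_pos; have tN := tau_measurable_le N.
have mdrop := measurable_taut_drop e.
have mND := measurableI _ _ (tau_measurable_measurable tN) mdrop.
have pE := fineK (fin_num_measure P _ mND); set p := fine _ in pE.
have p0 : (0 < p)%R by rewrite -lte_fin pE.
have p4 : (0 < p / 4)%R by rewrite divr_gt0.
have [b0 b00 rare] := drop_rare_where_rise_unlikely N e0 p4.
exists (Num.min (p / 4)%R b0) => [|c1 c2 c1V c2V]; first by rewrite lt_min p4.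
set b := Num.min _ _; have b_gt0 : (0 < b)%R by rewrite lt_min p4.
have [bp bb0] : (b <= p / 4)%R /\ (b <= b0)%R by rewrite /b !ge_min !lexx ?orbT.
set E1 := tau_le N `&` c1 @^-1` [set x | x < b%:E].
set E2 := tau_le N `&` c1 @^-1` [set x | b%:E <= x] `&` c2 @^-1` [set x | x < b%:E].
have tE1 : tau_measurable E1 :=
  tau_measurableI tN (tau_measurable_cond_exp c1V (emeasurable_lt _)).
have tE2 : tau_measurable E2 := tau_measurableI
  (tau_measurableI tN (tau_measurable_cond_exp c1V (emeasurable_ge _)))
  (tau_measurable_cond_exp c2V (emeasurable_lt _)).
have dropE1 : P (taut_drop e `&` E1) <= (p / 4)%R%:E.
  apply: le_trans (cond_prob_le c1V mdrop tE1 (ltW b_gt0) _) _.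
    by move=> w [_ /ltW].
  by rewrite lee_fin.
have dropE2 : P (taut_drop e `&` E2) < (p / 4)%R%:E.
  apply: rare c2V tE2 _ _; first by move=> w [[]].
  by move=> w [_ /ltW /le_trans]; apply; rewrite lee_fin.
set S := [set w | _ /\ _ /\ _].
have cover : tau_le N `&` taut_drop e `<=`
             S `|` (taut_drop e `&` E1) `|` (taut_drop e `&` E2).
  move=> w [wN wdrop].
  have [c1b|c1b] := ltP (c1 w) b%:E; first by left; right.
  have [c2b|c2b] := ltP (c2 w) b%:E; first by right.
  by left; left; split => //; apply: le_lt_trans wN _; rewrite ltry.
have cover_le : p%:E <= P S + P (taut_drop e `&` E1) + P (taut_drop e `&` E2).
  rewrite pE; apply: le_measure_cover3 mND (measurable_cond_prob_ge b c1V c2V) _ _ cover.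
    exact/measurableI/(tau_measurable_measurable tE1).
  exact/measurableI/(tau_measurable_measurable tE2).
rewrite lt0e measure_ge0 andbT; apply: contraTneq cover_le => ->.
rewrite add0e -ltNge.
apply: (@lt_le_trans _ _ ((p / 4)%R%:E + (p / 4)%R%:E)).
  apply: (lee_ltD _ dropE1 dropE2).
  by rewrite ge0_fin_numE // (le_lt_trans dropE1) ?ltry.
by rewrite -EFinD lee_fin; lra.
Qed.

End martingale.

End tau_events.

Theorem lemma3p2 (R : realType) (dim : nat) (hdim : (2 <= dim)%N)
  (d : measure_display) (Omega : measurableType d) (P : probability Omega R)
  (tau taut : Omega -> \bar R)
  (mtau : measurable_fun setT tau) (mtaut : measurable_fun setT taut)
  (tau_ge0 : forall w, 0 <= tau w) (taut_ge0 : forall w, 0 <= taut w)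
  (H1 : useful dim P tau)
  (H2 : (pc R dim)%:E < P [set w | tau w < +oo] /\
        (pc R dim)%:E < P [set w | taut w < +oo])
  (H3 : ~ (forall B : set (\bar R), measurable B ->
             P (tau @^-1` B) = P (taut @^-1` B)))
  (Hce : exists g, cond_exp_version P tau taut g /\
           {ae P, forall w, g w <= tau w} /\
           {ae P, forall w, g w = tau w})
  (Hfin : {ae P, forall w, (tau w < +oo) = (taut w < +oo)}) :
  exists beta : R, exists delta : R, (0 < beta)%R /\ (0 < delta)%R /\
    forall c1 c2 : Omega -> \bar R,
      cond_prob_version P tau
        [set w | taut w <= tau w - (2 * delta)%:E] c1 ->
      cond_prob_version P tau [set w | tau w <= taut w] c2 ->
      0 < P [set w | tau w < +oo /\ beta%:E <= c1 w /\ beta%:E <= c2 w].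
Proof.
have [g [g_cond [_ g_tau]]] := Hce.
have mart E := integral_cond_exp_ae P tau mtau (E := E) g_cond mtau g_tau.
have [N [delta [delta0 drop_pos]]] :=
  exists_drop_pos P tau mtau taut mtaut tau_ge0 taut_ge0 mart H3 Hfin.
have [beta beta0 cond_pos] :=
  cond_prob_lower_bound P tau mtau taut mtaut tau_ge0 taut_ge0 mart delta0 drop_pos.
by exists beta, delta.
Qed.
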